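(* Let $t$ be an odd prime and let $n\geq 1$ be an integer that is a quadratic nonresidue modulo $t$. Then for every $0\leq i\leq t-1$, \[ \overline{N}_{t-1}(i,t,n)=\frac{\overline{p}_{t-1}(n)}{t}\equiv 0 \pmod 2 . \] In particular, $\overline{p}_{t-1}(n)\equiv 0 \pmod{2t}$.
   Context: An overpartition of $n$ is a partition of $n$ in which the first occurrence of each distinct part size may be overlined. For an overpartition $\pi$, $\ell(\pi)$ denotes its total number of parts (overlined and non-overlined). A $(t-1)$-colored overpartition of $n$ is a tuple $\overrightarrow{\pi}=(\pi_1,\dots,\pi_{t-1})$ of overpartitions with $\sum_{k}|\pi_k|=n$, where $|\pi_k|$ is the sum of parts of $\pi_k$; $\overline{p}_{t-1}(n)$ denotes the number of such tuples. For such a tuple (with $t-1$ even) the multirank is \[ \overline{r}(\overrightarrow{\pi})=\sum_{k=1}^{(t-1)/2} k\bigl(\ell(\pi_k)-\ell(\pi_{t-k})\bigr). \] $\overline{N}_{t-1}(i,t,n)$ denotes the number of $(t-1)$-colored overpartitions of $n$ whose multirank $\overline{r}$ is congruent to $i$ modulo $t$. *)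

From HB Require Import structures.
From mathcomp Require Import all_boot all_order all_algebra.
Set Implicit Arguments. Unset Strict Implicit. Unset Printing Implicit Defensive.
Import Order.TTheory GRing.Theory Num.Theory.

(* An overpartition all of whose parts are <= N is encoded by its
   multiplicity/overline data: for j : 'I_N, (o j).1 is the number of parts
   equal to j+1 (at most N of them) and (o j).2 says whether the first
   occurrence of the part j+1 is overlined. *)
Definition opart (N : nat) := {ffun 'I_N -> 'I_N.+1 * bool}.

Definition opart_valid N (o : opart N) : bool :=
  [forall j, (o j).2 ==> (0 < (o j).1)].

Definition opart_size N (o : opart N) : nat :=
  \sum_(j < N) (j.+1 * (o j).1).

Definition opart_len N (o : opart N) : nat :=
  \sum_(j < N) (o j).1.

(* m-colored overpartitions of n: tuples (pi_1,...,pi_m), pi_k = F (k-1).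
   Every overpartition of size <= n has all parts <= n and all multiplicities
   <= n, so encoding with N = n loses nothing. *)
Definition colored_opart (m n : nat) (F : {ffun 'I_m -> opart n}) : bool :=
  [forall k, opart_valid (F k)] && (\sum_(k < m) opart_size (F k) == n).

Definition pbar (m n : nat) : nat :=
  #|[set F : {ffun 'I_m -> opart n} | colored_opart F]|.

(* l(pi_k) for k in 1..m (0 outside range, never used there) *)
Definition lenk m n (F : {ffun 'I_m -> opart n}) (k : nat) : nat :=
  if insub k.-1 is Some j then opart_len (F j) else 0.

Definition multirank m n (F : {ffun 'I_m -> opart n}) : int :=
  \sum_(1 <= k < (m./2).+1)
     (k%:Z * ((lenk F k)%:Z - (lenk F (m.+1 - k))%:Z))%R.

Definition Nbar (m i t n : nat) : nat :=
  #|[set F : {ffun 'I_m -> opart n} |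
       colored_opart F && ((multirank F - i%:Z) %% t%:Z == 0)%Z]|.

Definition qnr (n t : nat) : bool :=
  ~~ [exists x : 'I_t, x ^ 2 == n %[mod t]].

(* Give a coloured overpartition the weight xi ^ (sum_k k l(pi_k)), with xi a
   primitive t-th root of unity; the exponent is congruent to the multirank
   modulo t.  The weighted generating function is
     prod_(k=1)^(t-1) prod_j (1 + xi^k q^j) / (1 - xi^k q^j)
       = (q;q)_oo / (-q;q)_oo * (-q^t;q^t)_oo / (q^t;q^t)_oo,
   and by Gauss's identity the first quotient is sum_k (-1)^k q^(k^2), while
   the second is a series in q^t.  So the coefficient of q^n vanishes when n is
   not a square modulo t; since t is prime, every xi^a with 0 < a < t is again
   primitive, and the t residue classes of the multirank are equinumerous.
   Modulo 2 each factor (1 + x) / (1 - x) is 1, so pbar(n) is even for n >= 1,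
   and t is odd.  Series are handled as polynomials modulo q^(n+1), and Gauss's
   identity comes from the finite Jacobi triple product (q-binomial theorem). *)

From mathcomp Require Import all_boot all_order all_algebra.
From mathcomp Require Import ring zify.
From mathcomp Require Import algC cyclotomic.
Set Implicit Arguments. Unset Strict Implicit. Unset Printing Implicit Defensive.
Import Order.TTheory GRing.Theory Num.Theory.
Local Open Scope ring_scope.

Section CongruenceModXn.
Variable F : fieldType.
Implicit Types p q r a : {poly F}.

Definition eqmodX N p q := 'X^N %| p - q.

Lemma eqmodX_refl N p : eqmodX N p p.
Proof. by rewrite /eqmodX subrr dvdp0. Qed.

Lemma eqmodX_sym N p q : eqmodX N p q -> eqmodX N q p.
Proof. by rewrite /eqmodX -opprB dvdpNr. Qed.

Lemma eqmodX_trans N p q r : eqmodX N p q -> eqmodX N q r -> eqmodX N p r.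
Proof. by rewrite /eqmodX => hpq hqr; have := dvdp_add hpq hqr; rewrite addrA subrK. Qed.

Lemma eqmodXD N p p' q q' :
  eqmodX N p p' -> eqmodX N q q' -> eqmodX N (p + q) (p' + q').
Proof. by rewrite /eqmodX => hp hq; have := dvdp_add hp hq; rewrite opprD addrACA. Qed.

Lemma eqmodXM N p p' q q' :
  eqmodX N p p' -> eqmodX N q q' -> eqmodX N (p * q) (p' * q').
Proof.
move=> hp hq; rewrite /eqmodX.
have -> : p * q - p' * q' = (p - p') * q + p' * (q - q').
  by rewrite mulrBl mulrBr addrA subrK.
by apply: dvdp_add; [apply: dvdp_mulr | apply: dvdp_mull].
Qed.

Lemma eqmodXMl N a p q : eqmodX N p q -> eqmodX N (a * p) (a * q).
Proof. exact/eqmodXM/eqmodX_refl. Qed.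

Lemma eqmodX_sum N (I : Type) (s : seq I) (P : pred I) (f g : I -> {poly F}) :
  (forall i, P i -> eqmodX N (f i) (g i)) ->
  eqmodX N (\sum_(i <- s | P i) f i) (\sum_(i <- s | P i) g i).
Proof.
move=> h; elim/big_rec2: _ => [|i a b Pi hab]; first exact: eqmodX_refl.
exact/eqmodXD/hab/h.
Qed.

Lemma eqmodX_prod N (I : Type) (s : seq I) (P : pred I) (f g : I -> {poly F}) :
  (forall i, P i -> eqmodX N (f i) (g i)) ->
  eqmodX N (\prod_(i <- s | P i) f i) (\prod_(i <- s | P i) g i).
Proof.
move=> h; elim/big_rec2: _ => [|i a b Pi hab]; first exact: eqmodX_refl.
exact/eqmodXM/hab/h.
Qed.

Lemma eqmodX_leq M N p q : (M <= N)%N -> eqmodX N p q -> eqmodX M p q.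
Proof. by move=> le; apply: dvdp_trans; rewrite dvdp_exp2l. Qed.

Lemma eqmodX_mulXn k N p q : eqmodX N p q -> eqmodX (k + N) ('X^k * p) ('X^k * q).
Proof. by rewrite /eqmodX -mulrBr exprD; apply: dvdp_mul. Qed.

Lemma eqmodX_addXn N k p q : (N <= k)%N -> eqmodX N (p + 'X^k * q) p.
Proof.
by move=> le; rewrite /eqmodX addrAC subrr add0r dvdp_mulr // dvdp_exp2l.
Qed.

Lemma eqmodX_prod_1subXn N (I : Type) (r : seq I) (P : pred I) (e : I -> nat) :
  (forall i, P i -> (N <= e i)%N) -> eqmodX N (\prod_(i <- r | P i) (1 - 'X^(e i))) 1.
Proof.
move=> h; rewrite -[X in eqmodX _ _ X](big1_eq (op := *%R) r P).
by apply: eqmodX_prod => i Pi; rewrite -mulrN1; apply: eqmodX_addXn; apply: h.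
Qed.

Lemma eqmodX_coef N p q i : eqmodX N p q -> (i < N)%N -> p`_i = q`_i.
Proof.
move=> /divpK h lt; apply/eqP; rewrite -subr_eq0 -coefB -h.
by rewrite coefMXn lt.
Qed.

Lemma eqmodX_mul2l N a p q :
  a`_0 != 0 -> eqmodX N (a * p) (a * q) -> eqmodX N p q.
Proof.
move=> a0; rewrite /eqmodX -mulrBr Gauss_dvdpr //.
by rewrite coprimep_sym coprimep_expr // coprimepX rootE horner_coef0.
Qed.
End CongruenceModXn.

Section PolyInXn.
Variables (R : nzRingType) (t : nat).
Implicit Types p q : {poly R}.

Definition poly_in_Xn p := forall i, ~~ (t %| i)%N -> p`_i = 0.

Lemma poly_in_Xn1 : poly_in_Xn 1.
Proof. by case=> [|i] ti; [rewrite dvdn0 in ti | rewrite coef1]. Qed.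

Lemma poly_in_Xn_Xn k : (t %| k)%N -> poly_in_Xn 'X^k.
Proof. by move=> tk i ti; rewrite coefXn; case: eqP => // ik; rewrite ik tk in ti. Qed.

Lemma poly_in_XnD p q : poly_in_Xn p -> poly_in_Xn q -> poly_in_Xn (p + q).
Proof. by move=> hp hq i ti; rewrite coefD hp ?hq ?addr0. Qed.

Lemma poly_in_XnM p q : poly_in_Xn p -> poly_in_Xn q -> poly_in_Xn (p * q).
Proof.
move=> hp hq i ti; rewrite coefM big1 // => j _.
have [tj|ntj] := boolP (t %| j)%N; last by rewrite hp ?mul0r.
rewrite hq ?mulr0 //; apply: contra ti => tij.
by rewrite -(subnKC (_ : (j <= i)%N)) ?dvdn_add // -ltnS.
Qed.

Lemma poly_in_Xn_sum (I : Type) (r : seq I) (P : pred I) (f : I -> {poly R}) :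
  (forall i, P i -> poly_in_Xn (f i)) -> poly_in_Xn (\sum_(i <- r | P i) f i).
Proof.
by move=> h; apply: big_ind => // [i _|]; [rewrite coef0 | exact: poly_in_XnD].
Qed.

Lemma poly_in_Xn_prod (I : Type) (r : seq I) (P : pred I) (f : I -> {poly R}) :
  (forall i, P i -> poly_in_Xn (f i)) -> poly_in_Xn (\prod_(i <- r | P i) f i).
Proof. by move=> h; apply: big_ind => //; [exact: poly_in_Xn1 | exact: poly_in_XnM]. Qed.
End PolyInXn.

Lemma mul2_bin2 j : (2 * 'C(j, 2) = j * j.-1)%N.
Proof. by elim: j => // -[|j] IH //; rewrite binS bin1 mulnDr IH /= !mulSn !mulnS; lia. Qed.

Section QBinomial.
Variables (R : comNzRingType) (Q : R).

Fixpoint qbin (m j : nat) : R :=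
  match m, j with
  | 0, 0 => 1
  | 0, _.+1 => 0
  | m'.+1, 0 => 1
  | m'.+1, j'.+1 => qbin m' j' + Q ^+ j'.+1 * qbin m' j'.+1
  end.

Lemma qbin0 m : qbin m 0 = 1. Proof. by case: m. Qed.

Lemma qbin_gt m j : (m < j)%N -> qbin m j = 0.
Proof.
elim: m j => [|m IH] [|j] //= lt.
by rewrite !IH ?mulr0 ?addr0 // ltnW.
Qed.

Lemma qbinomial m x y :
  \prod_(i < m) (x + y * Q ^+ i) =
  \sum_(j < m.+1) Q ^+ 'C(j, 2) * qbin m j * x ^+ (m - j) * y ^+ j.
Proof.
elim: m y => [|m IH] y; first by rewrite big_ord0 big_ord1 /= !expr0 !mulr1.
rewrite big_ord_recl expr0 mulr1.
under eq_bigr => i _ do rewrite lift0 exprS mulrA.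
rewrite IH mulrDl !big_distrr /= [in RHS]big_ord_recl /=.
under [in RHS]eq_bigr => i _ do rewrite /bump /= add1n mulrDr !mulrDl.
rewrite big_split /= addrCA [LHS]addrC; congr (_ + _).
  by apply: eq_bigr => j _; rewrite binS bin1 subSS exprS exprMn exprD; ring.
rewrite big_ord_recl [in RHS]big_ord_recr /= (qbin_gt (ltnSn m)) qbin0 !subn0.
rewrite !expr0 !mulr1 !mulr0 !mul0r addr0 mul1r -exprS; congr (_ + _).
  by rewrite mul1r.
apply: eq_bigr => j _; rewrite /bump /= add0n add1n binS bin1 subSS exprS exprMn exprD.
rewrite -(subnSK (ltn_ord j)) !exprS; ring.
Qed.

Definition qpoch k := \prod_(i < k) (1 - Q ^+ i.+1).

Lemma qpochS k : qpoch k.+1 = qpoch k * (1 - Q ^+ k.+1).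
Proof. by rewrite /qpoch big_ord_recr. Qed.

Definition qpoch_shift a k := \prod_(i < k) (1 - Q ^+ (a + i).+1).

Lemma qpochD a k : qpoch (a + k) = qpoch a * qpoch_shift a k.
Proof. by rewrite /qpoch big_split_ord. Qed.

Lemma qbin_qpoch m j : (j <= m)%N -> qbin m j * qpoch j * qpoch (m - j) = qpoch m.
Proof.
elim: m j => [|m IH] [|j] //= le.
- by rewrite /qpoch !big_ord0 !mulr1.
- by rewrite /qpoch big_ord0 subn0 !mul1r.
have e1 : qbin m j * qpoch j.+1 * qpoch (m - j) = qpoch m * (1 - Q ^+ j.+1).
  by rewrite qpochS -(IH j) //; ring.
have e2 : Q ^+ j.+1 * qbin m j.+1 * qpoch j.+1 * qpoch (m - j) =
          Q ^+ j.+1 * qpoch m * (1 - Q ^+ (m - j)).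
  have [lt|ge] := ltnP j m; last first.
    have -> : j = m by apply/eqP; rewrite eqn_leq ge andbT.
    by rewrite subnn expr0 subrr (qbin_gt (ltnSn m)) !mulr0 !mul0r.
  by rewrite -(subnSK lt) (qpochS (m - j.+1)) -(IH j.+1) //; ring.
have eQ : Q ^+ m.+1 = Q ^+ j.+1 * Q ^+ (m - j) by rewrite -exprD addSn subnKC.
rewrite subSS mulrDl mulrDl e1 e2 qpochS eQ; ring.
Qed.
End QBinomial.

Lemma jtp_exponent M j : (j <= 2 * M.+1)%N ->
  (2 * 'C(j, 2) + (2 * M).+1 * (2 * M.+1 - j) =
   M.+1 * M + M.+1 * (2 * M).+1 + `|j - M.+1| ^ 2)%N.
Proof.
move=> le; have hj : (j <= j * j)%N by case: j {le} => // j; rewrite leq_pmulr.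
apply: (@addIn (2 * (j * M.+1))).
rewrite -[RHS]addnA sqrn_dist mul2_bin2 -subn1 mulnBr muln1.
apply/eqP; rewrite -eqz_nat !(PoszD, PoszM) -!subzn // !(PoszD, PoszM, intS).
by apply/eqP; ring.
Qed.

Section GaussIdentity.
Variable F : fieldType.
Local Notation Q1 := ('X : {poly F}).
Local Notation Q2 := ('X^2 : {poly F}).

Definition oddqpoch N : {poly F} := \prod_(i < N) (1 - 'X^((2 * i).+1)).

Definition theta N : {poly F} :=
  \sum_(j < (2 * N).+1) (-1) ^+ (j + N) * 'X^(`|j - N| ^ 2).

Lemma prod_Xodd_subX2 M :
  \prod_(i < 2 * M.+1) ('X^((2 * M).+1) + -1 * Q2 ^+ i) =
  (-1) ^+ M.+1 * 'X^(M.+1 * M + M.+1 * (2 * M).+1) * oddqpoch M.+1 ^+ 2.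
Proof.
rewrite mul2n -addnn big_split_ord /=.
have low : \prod_(i < M.+1) ('X^((2 * M).+1) + -1 * Q2 ^+ i) =
           (-1) ^+ M.+1 * 'X^(M.+1 * M) * oddqpoch M.+1.
  have e (i : 'I_M.+1) : 'X^((2 * M).+1) + -1 * Q2 ^+ i =
                         - 'X^(2 * i) * (1 - 'X^((2 * (M - i)).+1)).
    rewrite mulN1r -exprM mulNr mulrBr mulr1 -exprD opprB addrC.
    have -> : (2 * i + (2 * (M - i)).+1 = (2 * M).+1)%N by have := ltn_ord i; lia.
    by rewrite addrC.
  rewrite (eq_bigr _ (fun i _ => e i)) big_split /= prodrN card_ord prodrXr.
  rewrite -big_distrr /= -(big_mkord xpredT id) bin2_sum mul2_bin2; congr (_ * _).
  rewrite /oddqpoch (reindex_inj rev_ord_inj) /=; apply: eq_bigr => i _.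
  by rewrite subSS subKn // -ltnS.
have high : \prod_(i < M.+1) ('X^((2 * M).+1) + -1 * Q2 ^+ (M.+1 + i)) =
            'X^(M.+1 * (2 * M).+1) * oddqpoch M.+1.
  have e (i : 'I_M.+1) : 'X^((2 * M).+1) + -1 * Q2 ^+ (M.+1 + i) =
                         'X^((2 * M).+1) * (1 - 'X^((2 * i).+1)).
    rewrite mulN1r -exprM mulrBr mulr1 -exprD.
    by have -> : ((2 * M).+1 + (2 * i).+1 = 2 * (M.+1 + i))%N by lia.
  rewrite (eq_bigr _ (fun i _ => e i)) big_split /= prodr_const card_ord -exprM.
  by rewrite mulnC.
rewrite low high exprD; ring.
Qed.

(* The finite form of Jacobi's triple product identity at z = -1. *)
Lemma oddqpoch_sqr M :
  oddqpoch M.+1 ^+ 2 = \sum_(j < (2 * M.+1).+1)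
     (-1) ^+ (j + M.+1) * 'X^(`|j - M.+1| ^ 2) * qbin Q2 (2 * M.+1) j.
Proof.
have := qbinomial Q2 (2 * M.+1) 'X^((2 * M).+1) (-1).
rewrite prod_Xodd_subX2.
set e := (M.+1 * M + M.+1 * (2 * M).+1)%N.
have sign (a b : nat) : (-1) ^+ a * (-1) ^+ (b + a) = (-1) ^+ b :> {poly F}.
  by rewrite -exprD addnCA addnn -muln2 exprD exprM sqrr_sign mulr1.
under eq_bigr => j _.
  rewrite -!exprM -(sign M.+1 j) -(mulrAC 'X^(2 * 'C(j, 2))) -(exprD 'X).
  have -> : (2 * 'C(j, 2) + (2 * M).+1 * (2 * M.+1 - j) = e + `|j - M.+1| ^ 2)%N
    by apply: jtp_exponent; rewrite -ltnS.
  over.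
set S := \sum_(j < _) _; move=> hS.
apply: (mulfI (mulf_neq0 (negbT (signr_eq0 _ M.+1)) (monic_neq0 (monicXn _ e)))).
rewrite hS /S mulr_sumr; apply: eq_bigr => j _; rewrite exprD; ring.
Qed.

Lemma qpochX2_neq0 k : qpoch Q2 k != 0.
Proof.
apply/prodf_neq0 => i _; apply/eqP => /(congr1 (fun p : {poly F} => p`_0)).
by rewrite -exprM coefB coef1 coefXn /= subr0 coef0 => /eqP; rewrite oner_eq0.
Qed.

Lemma qpoch_shiftX2_eqmodX K a k :
  (K <= 2 * a.+1)%N -> eqmodX K (qpoch_shift Q2 a k) 1.
Proof.
move=> le; rewrite /qpoch_shift; under eq_bigr => i _ do rewrite -exprM.
by apply: eqmodX_prod_1subXn => i _; rewrite (leq_trans le) // leq_mul2l ltnS leq_addr.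
Qed.

Lemma qpochX2_mul_qbin N a k j : N = (a + k)%N -> (j = a \/ j = a + 2 * k)%N ->
  qpoch Q2 N * qbin Q2 (2 * N) j = qpoch_shift Q2 a k * qpoch_shift Q2 (N + k) a.
Proof.
move=> hN hj.
have hjN : (j <= 2 * N)%N by case: hj => ->; rewrite hN; lia.
have hpair : qpoch Q2 j * qpoch Q2 (2 * N - j) = qpoch Q2 a * qpoch Q2 (N + k).
  case: hj => ->; first by have -> : (2 * N - a = N + k)%N by rewrite hN; lia.
  have -> : (2 * N - (a + 2 * k) = a)%N by rewrite hN; lia.
  by rewrite mulrC hN -addnA addnn -mul2n.
apply: (mulfI (mulf_neq0 (qpochX2_neq0 a) (qpochX2_neq0 (N + k)))).
rewrite -{1}hpair.
transitivity (qpoch Q2 N * (qbin Q2 (2 * N) j * qpoch Q2 j * qpoch Q2 (2 * N - j))).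
  by ring.
rewrite qbin_qpoch // (_ : (2 * N = (N + k) + a)%N); last by rewrite hN; lia.
rewrite qpochD {1}hN qpochD; ring.
Qed.

Lemma qpochX2_oddqpoch_sqr M :
  eqmodX M.+2 (qpoch Q2 M.+1 * oddqpoch M.+1 ^+ 2) (theta M.+1).
Proof.
rewrite oddqpoch_sqr mulr_sumr; apply: eqmodX_sum => j _.
have [a [k [hN hj]]] : exists a k, M.+1 = (a + k)%N /\ (j = a :> nat \/ j = a + 2 * k :> nat).
  have [le|lt] := leqP j M.+1; first by exists j, (M.+1 - j)%N; split; [rewrite subnKC | left].
  by exists (2 * M.+1 - j)%N, (j - M.+1)%N; split; last right; have := ltn_ord j; lia.
have -> : (`|j - M.+1| = k)%N by case: hj => ->; rewrite hN; lia.
rewrite -mulrCA -mulrA; apply: eqmodXMl.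
rewrite (qpochX2_mul_qbin hN hj) -[X in eqmodX _ _ X]mulr1.
apply: (@eqmodX_leq _ _ (k ^ 2 + 2 * a.+1)); first by rewrite hN; nia.
apply: eqmodX_mulXn; rewrite -[1]mulr1.
by apply: eqmodXM; apply: qpoch_shiftX2_eqmodX => //; rewrite hN; lia.
Qed.

Definition negqpoch N : {poly F} := \prod_(i < N) (1 + 'X^(i.+1)).

Lemma qpochX_double N : qpoch Q1 (2 * N) = oddqpoch N * qpoch Q2 N.
Proof.
elim: N => [|N IH]; first by rewrite /qpoch /oddqpoch !big_ord0 mulr1.
rewrite mulnS !qpochS IH /oddqpoch big_ord_recr /= -!exprM.
by rewrite (_ : (2 * N.+1 = (2 * N).+2)%N); [ring | lia].
Qed.

Lemma qpochX_negqpoch N : qpoch Q1 N * negqpoch N = qpoch Q2 N.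
Proof.
rewrite /qpoch /negqpoch -big_split /=; apply: eq_bigr => i _.
by rewrite -exprM mulnC exprM; ring.
Qed.

Lemma qpochX_eqmodX N : eqmodX N.+1 (qpoch Q1 (N + N)) (qpoch Q1 N).
Proof.
rewrite qpochD -[X in eqmodX _ _ X]mulr1; apply: eqmodXMl.
by apply: eqmodX_prod_1subXn => i _; rewrite ltnS leq_addr.
Qed.

Lemma coef0_negqpoch N : (negqpoch N)`_0 = 1.
Proof.
rewrite -horner_coef0 horner_prod big1 // => i _.
by rewrite hornerD hornerC hornerXn expr0n addr0.
Qed.

Lemma gauss_identity N : eqmodX N.+1 (qpoch Q1 N) (theta N * negqpoch N).
Proof.
case: N => [|M].
  by rewrite /qpoch /theta /negqpoch !big_ord0 big_ord1 /= !expr0 !mulr1; apply: eqmodX_refl.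
set N := M.+1.
have h : eqmodX N.+1 (qpoch Q2 N * oddqpoch N ^+ 2 * negqpoch N) (qpoch Q1 N).
  have -> : qpoch Q2 N * oddqpoch N ^+ 2 * negqpoch N =
            oddqpoch N * qpoch Q1 (N + N) * negqpoch N.
    by rewrite addnn -mul2n qpochX_double; ring.
  apply: (@eqmodX_trans _ _ _ (oddqpoch N * qpoch Q1 N * negqpoch N)).
    by apply: eqmodXM; [apply: eqmodXMl; apply: qpochX_eqmodX | apply: eqmodX_refl].
  by rewrite -mulrA qpochX_negqpoch -qpochX_double mul2n -addnn; apply: qpochX_eqmodX.
apply: eqmodX_sym; apply: eqmodX_trans h.
by apply: eqmodXM; [apply: eqmodX_sym; apply: qpochX2_oddqpoch_sqr | apply: eqmodX_refl].
Qed.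
End GaussIdentity.

Lemma qnr_sqr_ndvd t n d : (0 < t)%N -> qnr n t -> (d ^ 2 <= n)%N -> ~~ (t %| n - d ^ 2)%N.
Proof.
move=> t0 hq le; apply: contra hq => tn; apply/existsP.
by exists (Ordinal (ltn_pmod d t0)); rewrite /= modnXm eq_sym eqn_mod_dvd.
Qed.

Lemma coef_signM (R : nzRingType) k (p : {poly R}) i :
  ((-1) ^+ k * p)`_i = (-1) ^+ k * p`_i.
Proof.
rewrite -[in LHS]signr_odd -[in RHS]signr_odd.
by case: (odd k); rewrite ?expr1 ?expr0 ?mulN1r ?mul1r ?coefN.
Qed.

Lemma coef_theta_mul (F : fieldType) t n N (S : {poly F}) :
  (0 < t)%N -> qnr n t -> poly_in_Xn t S -> (theta F N * S)`_n = 0.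
Proof.
move=> t0 hq hS; rewrite /theta mulr_suml coef_sum big1 // => j _.
rewrite -mulrA coef_signM coefXnM; case: ifP => [|hlt]; first by rewrite mulr0.
by rewrite hS ?mulr0 // qnr_sqr_ndvd // leqNgt hlt.
Qed.

Section OddRootsOfUnity.
Variables (F : fieldType) (T : nat) (xi : F).
Hypothesis xi_prim : T.+1.-primitive_root xi.
Hypothesis t_odd : odd T.+1.
Implicit Type y : {poly F}.

Lemma prod_1subXprim y : \prod_(c < T.+1) (1 - (xi ^+ c)%:P * y) = 1 - y ^+ T.+1.
Proof.
have xiV_prim : T.+1.-primitive_root (xi ^+ T).
  by rewrite prim_root_exp_coprime // coprimenS.
have := congr1 (comp_poly y) (factor_Xn_sub_1 xiV_prim).
rewrite rmorph_prod /= big_mkord rmorphB rmorphXn /= comp_polyX rmorph1.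
under eq_bigr => i _ do rewrite rmorphB /= comp_polyX comp_polyC.
have e (c : 'I_T.+1) : 1 - (xi ^+ c)%:P * y = - (xi ^+ c)%:P * (y - ((xi ^+ T) ^+ c)%:P).
  rewrite mulNr mulrBr -rmorphM /= -exprMn -exprS.
  by rewrite (prim_expr_order xi_prim) expr1n opprB.
move=> hy; rewrite (eq_bigr _ (fun c _ => e c)) big_split /= hy prodrN card_ord.
rewrite -rmorph_prod /= prodrXr -(big_mkord xpredT id) bin2_sum bin2odd //.
rewrite exprM (prim_expr_order xi_prim) expr1n -signr_odd t_odd expr1; ring.
Qed.

Lemma prod_1addXprim y : \prod_(c < T.+1) (1 + (xi ^+ c)%:P * y) = 1 + y ^+ T.+1.
Proof.
have := prod_1subXprim (- y); rewrite exprNn -signr_odd t_odd expr1 mulN1r opprK.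
by under eq_bigr => c _ do rewrite mulrN opprK.
Qed.

Lemma sum_prim_expr r :
  \sum_(a < T.+1) (xi ^+ r) ^+ a = if (T.+1 %| r)%N then T.+1%:R else 0.
Proof.
case: ifP => tr.
  have -> : xi ^+ r = 1 by apply/eqP; rewrite -(prim_order_dvd xi_prim).
  by rewrite (eq_bigr (fun=> 1)) ?sumr_const ?card_ord // => a _; rewrite expr1n.
have ne : xi ^+ r - 1 != 0 by rewrite subr_eq0 -(prim_order_dvd xi_prim) tr.
apply: (mulfI ne); rewrite mulr0 -subrX1 exprAC (prim_expr_order xi_prim).
by rewrite expr1n subrr.
Qed.
End OddRootsOfUnity.

Lemma prodr_natb (R : comPzSemiRingType) (I : finType) (b : pred I) :
  \prod_(i : I) ((b i)%:R : R) = [forall i, b i]%:R.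
Proof.
have [/forallP h|/forallPn [i hi]] := boolP [forall i, b i].
  by rewrite big1 // => i _; rewrite h.
by rewrite (bigD1 i) //= (negbTE hi) mul0r.
Qed.

Lemma mul1B_1add2_geometric (R : comNzRingType) (z : R) n :
  (1 - z) * (1 + 2%:R * \sum_(a < n) z ^+ a.+1) = 1 + z - 2%:R * z ^+ n.+1.
Proof.
have geo : (1 - z) * \sum_(a < n) z ^+ a.+1 = z - z ^+ n.+1.
  under eq_bigr => a _ do rewrite exprS.
  by rewrite -mulr_sumr mulrCA -opprB mulNr -subrX1 exprS; ring.
by rewrite mulrDr mulr1 mulrCA geo; ring.
Qed.

Section OverpartitionGF.
Variables (R : comNzRingType) (xi : R) (m n : nat).

(* The contribution of the datum [x] (multiplicity, overline) of the part size
   [j.+1] in colour [k.+1]; each part of colour [k.+1] carries [xi ^+ k.+1]. *)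
Definition part_term k j (x : 'I_n.+1 * bool) : {poly R} :=
  (x.2 ==> (0 < x.1)%N)%:R * ((xi ^+ (k.+1 * x.1))%:P * 'X^(j.+1 * x.1)).

Definition opart_factor k j : {poly R} := \sum_(x : 'I_n.+1 * bool) part_term k j x.

Definition colour_weight (F : {ffun 'I_m -> opart n}) : nat :=
  \sum_(k < m) k.+1 * opart_len (F k).

Lemma prod_part_term k (o : opart n) :
  \prod_(j < n) part_term k j (o j) =
  (opart_valid o)%:R * ((xi ^+ (k.+1 * opart_len o))%:P * 'X^(opart_size o)).
Proof.
rewrite /part_term big_split /= prodr_natb big_split /= prodrXr.
by rewrite -rmorph_prod /= prodrXr /opart_len /opart_size big_distrr.
Qed.

Lemma coef_prod_opart_factor :
  (\prod_(k < m) \prod_(j < n) opart_factor k j)`_n =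
  \sum_(F : {ffun 'I_m -> opart n} | colored_opart F) xi ^+ colour_weight F.
Proof.
rewrite /opart_factor.
under eq_bigr => k _ do rewrite bigA_distr_bigA /=.
rewrite bigA_distr_bigA /= coef_sum [RHS]big_mkcond /=; apply: eq_bigr => F _.
under eq_bigr => k _ do rewrite prod_part_term.
rewrite big_split /= prodr_natb big_split /= -rmorph_prod /= !prodrXr /colored_opart.
have [valid|] /= := boolP [forall k, opart_valid (F k)]; last by rewrite !mul0r coef0.
by rewrite mul1r coefCM coefXn eq_sym; case: eqP; rewrite ?mulr1 ?mulr0.
Qed.

Lemma opart_factorE k j : opart_factor k j =
  1 + 2%:R * \sum_(a < n) ((xi ^+ k.+1)%:P * 'X^(j.+1)) ^+ a.+1.
Proof.
rewrite /opart_factor -(pair_bigA _ (fun a b => part_term k j (a, b))) /=.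
rewrite big_ord_recl !big_bool /part_term /= !muln0 !expr0 !mul0r mul1r !add0r.
rewrite mulr1 polyC1 mulr_sumr; congr (_ + _); apply: eq_bigr => a _.
by rewrite big_bool /bump /= add1n !mul1r mulr_natl mulr2n exprMn -rmorphXn -!exprM.
Qed.
End OverpartitionGF.

Section ColouredGFVanishes.
Variables (F : fieldType) (T : nat) (xi : F).
Hypothesis xi_prim : T.+1.-primitive_root xi.
Hypothesis t_odd : odd T.+1.
Variable n : nat.
Hypothesis n_qnr : qnr n T.+1.

Lemma opart_factor_eqmodX k j (z := (xi ^+ k.+1)%:P * 'X^(j.+1)) :
  eqmodX n.+1 ((1 - z) * opart_factor xi n k j) (1 + z).
Proof.
rewrite opart_factorE mul1B_1add2_geometric /eqmodX addrAC subrr add0r dvdpNr.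
rewrite dvdp_mull // /z exprMn dvdp_mull // -exprM dvdp_exp2l //.
by rewrite mulnC leq_pmulr.
Qed.

Lemma prod_colours_eqmodX j (y := 'X^(j.+1) : {poly F}) :
  eqmodX n.+1 ((1 - y ^+ T.+1) * (1 + y) * \prod_(k < T) opart_factor xi n k j)
               ((1 - y) * (1 + y ^+ T.+1)).
Proof.
rewrite -(prod_1subXprim xi_prim t_odd) -(prod_1addXprim xi_prim t_odd).
rewrite !big_ord_recl !expr0 !mul1r.
set S := \prod_(k < T) (1 - _); set P := \prod_(k < T) opart_factor _ _ _ _.
rewrite (_ : _ * S * _ * P = (1 - y) * ((1 + y) * (S * P))); last by ring.
do 2!apply: eqmodXMl.
by rewrite /S /P -big_split /=; apply: eqmodX_prod => k _; apply: opart_factor_eqmodX.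
Qed.

Lemma coef_prod_opart_factor_prim :
  (\prod_(k < T) \prod_(j < n) opart_factor xi n k j)`_n = 0.
Proof.
set E := \prod_(k < T) _.
set B1 := \prod_(j < n) (1 - 'X^(j.+1) ^+ T.+1 : {poly F}).
set B2 := \prod_(j < n) (1 + 'X^(j.+1) ^+ T.+1 : {poly F}).
set V := \prod_(j < n) \sum_(a < n.+1) ('X^(j.+1) ^+ T.+1 : {poly F}) ^+ a.
have hE : eqmodX n.+1 (negqpoch F n * (B1 * E)) (negqpoch F n * (theta F n * B2)).
  apply: (@eqmodX_trans _ _ _ (qpoch 'X n * B2)); last first.
    by rewrite mulrCA mulrA; apply: eqmodXM; [exact: gauss_identity | exact: eqmodX_refl].
  rewrite mulrCA mulrA /E exchange_big /B1 /B2 /qpoch /negqpoch -!big_split /=.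
  by apply: eqmodX_prod => j _; exact: prod_colours_eqmodX.
move/(eqmodX_mul2l _): hE; rewrite coef0_negqpoch oner_neq0 => /(_ isT) hE.
have hV : eqmodX n.+1 (B1 * V) 1.
  rewrite /B1 /V -big_split /=.
  under eq_bigr => j _ do rewrite -opprB mulNr -subrX1 opprB -!exprM.
  by apply: eqmodX_prod_1subXn => j _; rewrite leq_pmull.
have B1_0 : B1`_0 != 0.
  have /eqmodX_coef -> // : eqmodX 1 B1 1.
    by rewrite /B1; under eq_bigr => j _ do rewrite -exprM; exact: eqmodX_prod_1subXn.
  by rewrite coef1 oner_neq0.
have {}hE : eqmodX n.+1 E (theta F n * (B2 * V)).
  apply: (eqmodX_mul2l B1_0); apply: eqmodX_trans hE _.
  rewrite (_ : B1 * _ = theta F n * B2 * (B1 * V)); last by ring.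
  by rewrite -[X in eqmodX _ X _]mulr1; apply/eqmodXMl/eqmodX_sym.
rewrite (eqmodX_coef hE (ltnSn n)) (coef_theta_mul _ _ n_qnr) //.
apply: poly_in_XnM; apply: poly_in_Xn_prod => j _.
  by apply: poly_in_XnD; [exact: poly_in_Xn1 | rewrite -exprM; apply/poly_in_Xn_Xn/dvdn_mull].
by apply: poly_in_Xn_sum => a _; rewrite -!exprM; apply/poly_in_Xn_Xn/dvdn_mull/dvdn_mulr.
Qed.
End ColouredGFVanishes.

Section MultirankWeight.
Variables (T n : nat).
Implicit Type F : {ffun 'I_T -> opart n}.

Lemma lenkE F (k : 'I_T) : lenk F k.+1 = opart_len (F k).
Proof.
rewrite /lenk /= (insubT (fun x => (x < T)%N) (ltn_ord k)) /=.
by congr (opart_len (F _)); apply: val_inj.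
Qed.

Lemma Posz_sum (r : seq nat) (f : nat -> nat) :
  (\sum_(i <- r) f i)%N%:Z = \sum_(i <- r) (f i)%:Z.
Proof. by apply: (big_morph Posz) => // x y; rewrite PoszD. Qed.

(* Colour [T - k] enters the multirank with coefficient [- k.+1] and the
   weight with [T - k], and these differ by exactly [t = T.+1]. *)
Lemma multirankE F : ~~ odd T ->
  multirank F = (colour_weight F)%:Z -
                T.+1%:Z * (\sum_(0 <= k < T./2) lenk F (T - k))%N%:Z.
Proof.
move=> T_even; set h := T./2; set L := lenk F.
have hT : T = (h + h)%N by rewrite -{1}(odd_double_half T) (negbTE T_even) -addnn.
have eT : (T - h = h)%N by rewrite hT addnK.
have ew : colour_weight F =
    (\sum_(0 <= k < h) k.+1 * L k.+1 + \sum_(0 <= k < h) (T - k) * L (T - k))%N.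
  rewrite /colour_weight (eq_bigr (fun k : 'I_T => k.+1 * L k.+1)%N); last first.
    by move=> k _; rewrite /L lenkE.
  rewrite -(big_mkord xpredT (fun k => k.+1 * L k.+1)%N) (@big_cat_nat _ _ _ h) //=;
    last by rewrite hT leq_addr.
  congr (_ + _)%N; rewrite -{1}[h]add0n big_addn big_nat_rev add0n eT.
  by apply: eq_big_nat => k /andP [_ hk]; rewrite (_ : (h - k.+1 + h).+1 = T - k)%N //; lia.
have em : multirank F = (\sum_(0 <= k < h) k.+1 * L k.+1)%N%:Z -
                        (\sum_(0 <= k < h) k.+1 * L (T - k))%N%:Z.
  rewrite /multirank -/h big_add1 /= !Posz_sum -sumrB; apply: eq_bigr => k _.
  by rewrite subSS !PoszM mulrBr.
have eD : (\sum_(0 <= k < h) (T - k) * L (T - k) + \sum_(0 <= k < h) k.+1 * L (T - k) =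
           T.+1 * \sum_(0 <= k < h) L (T - k))%N.
  rewrite -big_split big_distrr /=; apply: eq_big_nat => k /andP [_ hk].
  by rewrite -mulnDl (_ : T - k + k.+1 = T.+1)%N //; lia.
rewrite em ew -PoszM -eD !PoszD; ring.
Qed.

Lemma multirank_congr F i : ~~ odd T -> (i <= T)%N ->
  ((multirank F - i%:Z) %% T.+1%:Z == 0)%Z = (T.+1 %| colour_weight F + (T.+1 - i))%N.
Proof.
move=> T_even le; rewrite multirankE //.
set C := (\sum_(0 <= k < T./2) lenk F (T - k))%N.
rewrite (_ : _ - _ - _ = (- C%:Z - 1) * T.+1%:Z + (colour_weight F + (T.+1 - i))%N%:Z).
  by rewrite modzMDl modz_nat.
by rewrite PoszD -subzn ?(leq_trans le) //; ring.
Qed.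
End MultirankWeight.

Lemma sum_colour_weight_prim (C : fieldType) T n (z : C) :
  T.+1.-primitive_root z -> odd T.+1 -> qnr n T.+1 ->
  \sum_(F : {ffun 'I_T -> opart n} | colored_opart F) z ^+ colour_weight F = 0.
Proof.
by move=> z_prim t_odd n_qnr; rewrite -coef_prod_opart_factor coef_prod_opart_factor_prim.
Qed.

Lemma Nbar_equidistributed T n i : prime T.+1 -> odd T.+1 -> qnr n T.+1 -> (i <= T)%N ->
  (T.+1 * Nbar T i T.+1 n = pbar T n)%N.
Proof.
move=> t_prime t_odd n_qnr le.
have [z z_prim] := C_prim_root_exists (ltn0Sn T).
have T_even : ~~ odd T by rewrite -oddS.
apply/eqP; rewrite -(eqr_nat algC) natrM; apply/eqP.
have cardE (P : pred {ffun 'I_T -> opart n}) : #|[set F | P F]|%:R = \sum_(F | P F) 1 :> algC.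
  by rewrite sumr_const cardsE.
rewrite /Nbar /pbar !cardE.
under eq_bigl => F do rewrite (multirank_congr F T_even le).
rewrite big_mkcondr mulr_sumr.
transitivity (\sum_(F : {ffun 'I_T -> opart n} | colored_opart F)
               \sum_(a < T.+1) (z ^+ (colour_weight F + (T.+1 - i))) ^+ a).
  by apply: eq_bigr => F _; rewrite (sum_prim_expr z_prim); case: ifP; rewrite ?mulr1 ?mulr0.
rewrite exchange_big big_ord_recl /=.
under eq_bigr => F _ do rewrite expr0.
rewrite [X in _ + X]big1 ?addr0 // => a _.
have za_prim : T.+1.-primitive_root (z ^+ a.+1).
  by rewrite prim_root_exp_coprime // coprime_sym prime_coprime // gtnNdvd // ltnS.
under eq_bigr => F _ do rewrite exprAC exprD.
by rewrite -mulr_suml (sum_colour_weight_prim za_prim t_odd n_qnr) mul0r.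
Qed.

Lemma prod_1add2M (R : comNzRingType) (I : Type) (r : seq I) (f : I -> R) :
  (forall i, exists g, f i = 1 + 2%:R * g) -> exists b, \prod_(i <- r) f i = 1 + 2%:R * b.
Proof.
move=> h; elim/big_rec: _ => [|i p _ [b ->]]; first by exists 0; rewrite mulr0 addr0.
by have [g ->] := h i; exists (g + b + 2%:R * g * b); ring.
Qed.

(* Each factor (1 + q^j) / (1 - q^j) of the generating function is 1 mod 2. *)
Lemma pbar_even m n : (0 < n)%N -> ~~ odd (pbar m n).
Proof.
move=> n_gt0; have := coef_prod_opart_factor (1 : int) m n.
have [b ->] : exists b, \prod_(k < m) \prod_(j < n) opart_factor (1 : int) n k j = 1 + 2%:R * b.
  by do 2!apply: prod_1add2M => ?; rewrite opart_factorE; eexists.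
rewrite coefD coef1 gtn_eqF // add0r mulr_natl coefMn.
under eq_bigr => F _ do rewrite expr1n.
rewrite sumr_const => e.
have /(congr1 absz) : (pbar m n)%:Z = b`_n * 2 by rewrite /pbar cardsE -natz -e mulr_natr.
by move=> /= ->; rewrite abszM oddM andbF.
Qed.
Local Close Scope ring_scope.

Theorem theorem2p3 (t n : nat) :
  prime t -> odd t -> 1 <= n -> qnr n t ->
  (forall i, i <= t - 1 ->
     t * Nbar (t - 1) i t n = pbar (t - 1) n /\ ~~ odd (Nbar (t - 1) i t n))
  /\ (2 * t %| pbar (t - 1) n).
Proof.
case: t => [|T] t_prime t_odd n_gt0 n_qnr; first by have := prime_gt1 t_prime.
rewrite subn1 /=.
have count i : i <= T -> T.+1 * Nbar T i T.+1 n = pbar T n.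
  exact: Nbar_equidistributed.
have Nbar_even i : i <= T -> ~~ odd (Nbar T i T.+1 n).
  move=> le; apply: contra (pbar_even T n_gt0) => Nbar_odd.
  by rewrite -(count i le) oddM t_odd Nbar_odd.
split=> [i le|]; first by split; [exact: count | exact: Nbar_even].
by rewrite -(count 0 (leq0n T)) [2 * _]mulnC dvdn_pmul2l // dvdn2 Nbar_even.
Qed.
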